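(* Let $G$ be a connected threshold graph of order $n\ge 4$ and size $m$ with $n-1<m<\binom{n}{2}$, with backwards zero position sequence $(b_1,\ldots,b_z)$ and numbers $F_p$ as in the context. Let $B\in\mathbb{R}^{z\times z}$ be given by $B_{ij}=b_{\max\{i,j\}}$, $w=(b_1,\ldots,b_z)^\intercal$, and let $\lambda_1,\ldots,\lambda_z$ be the eigenvalues of $B$ with corresponding orthonormal eigenvectors $x_1,\ldots,x_z$. Then \[F_p=\sum_{i=1}^z (w^\intercal x_i)^2\,\lambda_i^{p-1}\qquad(p\in\mathbb{N}).\]
   Context: A threshold graph is a simple graph whose vertices can be ordered $v_1,\ldots,v_n$ so that for each $2\le i\le n$, $v_i$ is either adjacent to all of $v_1,\ldots,v_{i-1}$ (then $a_i=1$) or to none of them (then $a_i=0$); by convention $a_1=1$. Vertex $v_i$ is of type 1 if $a_i=1$ and of type 0 if $a_i=0$; $c$ and $z$ are the numbers of type 1 and type 0 vertices. The backwards zero position sequence $(b_1,\ldots,b_z)$ is defined by letting $b_i$ be the number of type 1 vertices appearing after the $i$-th type 0 vertex in the order $v_1,\ldots,v_n$. For $p\ge1$, $F_p=\sum_{i_1,\ldots,i_p=1}^{z} b_{i_1}\min\{b_{i_1},b_{i_2}\}\cdots\min\{b_{i_{p-1}},b_{i_p}\}\,b_{i_p}$ (with $F_1=\sum_i b_i^2$). *)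

From HB Require Import structures.
From mathcomp Require Import all_boot all_order all_algebra.
Set Implicit Arguments. Unset Strict Implicit. Unset Printing Implicit Defensive.
Import Order.TTheory GRing.Theory Num.Theory.

(* A threshold graph on vertices v_1..v_n is encoded by its creation sequence
   a : 'I_n -> bool (0-indexed: vertex i is v_{i+1}); a i = true means type 1.
   The convention a_1 = 1 is imposed as a hypothesis in the theorem. *)

(* adjacency: for i < j, v_i ~ v_j iff a j (v_j joins all previous vertices). *)
Definition thr_adj n (a : 'I_n -> bool) : rel 'I_n :=
  fun i j => (i != j) && (if (i < j)%N then a j else a i).

Definition thr_connected n (a : 'I_n -> bool) : Prop :=
  forall i j : 'I_n, connect (thr_adj a) i j.

Definition thr_size n (a : 'I_n -> bool) : nat :=
  #|[set p : 'I_n * 'I_n | (p.1 < p.2)%N && thr_adj a p.1 p.2]|.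

Definition zero_positions n (a : 'I_n -> bool) : seq 'I_n :=
  [seq i <- enum 'I_n | ~~ a i].

Definition bzps n (a : 'I_n -> bool) : seq nat :=
  [seq #|[set j : 'I_n | (i < j)%N && a j]| | i : 'I_n <- zero_positions a].

(* F_p = sum_{i_1..i_p} b_{i1} min(b_{i1},b_{i2}) ... min(b_{i_{p-1}},b_{i_p}) b_{i_p},
   intended for p >= 1. *)
Definition Fp (b : seq nat) (p : nat) : nat :=
  \sum_(f : {ffun 'I_p -> 'I_(size b)})
    let c := [seq nth 0 b (f k) | k <- enum 'I_p] in
    head 0 c * (\prod_(k < p.-1) minn (nth 0 c k) (nth 0 c k.+1)) * last 0 c.

Definition Bmat (R : nzRingType) (b : seq nat) : 'M[R]_(size b) :=
  \matrix_(i, j) ((nth 0 b (maxn i j))%:R)%R.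

Definition wvec (R : nzRingType) (b : seq nat) : 'cV[R]_(size b) :=
  \col_i ((nth 0 b i)%:R)%R.

From HB Require Import structures.
From mathcomp Require Import all_boot all_order all_algebra.
Set Implicit Arguments. Unset Strict Implicit. Unset Printing Implicit Defensive.
Import Order.TTheory GRing.Theory Num.Theory.
Local Open Scope ring_scope.

(* Since b is nonincreasing, min(b_i, b_j) = b_max(i,j) = B_ij, so F_p is the
   sum over all walks of length p - 1 in the complete graph with weights B_ij,
   weighted by w at both ends; that is F_p = w^T B^(p-1) w.  Expanding w in
   the orthonormal eigenbasis of B gives the formula. *)

Definition ffun_cons (J : finType) q (j : J) (g : {ffun 'I_q -> J}) :
    {ffun 'I_q.+1 -> J} :=
  [ffun k => if unlift ord0 k is Some k' then g k' else j].

Definition ffun_behead (J : finType) q (f : {ffun 'I_q.+1 -> J}) :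
    {ffun 'I_q -> J} :=
  [ffun k => f (lift ord0 k)].

Lemma ffun_cons0 (J : finType) q (j : J) (g : {ffun 'I_q -> J}) :
  ffun_cons j g ord0 = j.
Proof. by rewrite ffunE unlift_none. Qed.

Lemma ffun_cons_lift (J : finType) q (j : J) (g : {ffun 'I_q -> J}) k :
  ffun_cons j g (lift ord0 k) = g k.
Proof. by rewrite ffunE liftK. Qed.

Lemma big_ffun_recl (R : Type) (idx : R) (op : Monoid.com_law idx)
    (J : finType) q (F : {ffun 'I_q.+1 -> J} -> R) :
  \big[op/idx]_(f : {ffun 'I_q.+1 -> J}) F f =
  \big[op/idx]_(j : J) \big[op/idx]_(g : {ffun 'I_q -> J}) F (ffun_cons j g).
Proof.
rewrite pair_big (reindex (fun p => ffun_cons p.1 p.2)) //=.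
apply: onW_bij; exists (fun f : {ffun 'I_q.+1 -> J} => (f ord0, ffun_behead f)).
  move=> [j g] /=.
  by rewrite ffun_cons0; congr pair; apply/ffunP => k; rewrite ffunE ffun_cons_lift.
move=> f; apply/ffunP => k; rewrite ffunE.
by case: unliftP => [k' ->|->]; rewrite ?ffunE.
Qed.

Section Walks.

Variables (R : comPzRingType) (z : nat) (M : 'M[R]_z).

Definition walk_weight q (f : {ffun 'I_q.+1 -> 'I_z}) : R :=
  \prod_(k < q) M (f (widen_ord (leqnSn q) k)) (f (lift ord0 k)).

Lemma walk_weight_cons q j (g : {ffun 'I_q.+1 -> 'I_z}) :
  walk_weight (ffun_cons j g) = M j (g ord0) * walk_weight g.
Proof.
rewrite /walk_weight big_ord_recl ffun_cons_lift.
have -> : widen_ord (leqnSn q.+1) ord0 = ord0 by apply: val_inj.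
rewrite ffun_cons0; congr (_ * _); apply: eq_bigr => k _.
have -> : widen_ord (leqnSn q.+1) (lift ord0 k) = lift ord0 (widen_ord (leqnSn q) k).
  exact: val_inj.
by rewrite !ffun_cons_lift.
Qed.

Lemma sum_walks_mx_pow q (u v : 'cV[R]_z) :
  \sum_(f : {ffun 'I_q.+1 -> 'I_z}) u (f ord0) 0 * walk_weight f * v (f ord_max) 0
    = (u^T *m M ^+ q *m v) 0 0.
Proof.
elim: q u => [|q IHq] u.
  rewrite expr0 mulmx1 mxE big_ffun_recl; apply: eq_bigr => j _.
  rewrite (eq_bigr (fun _ => u j 0 * v j 0)) => [|g _]; last first.
    rewrite /walk_weight big_ord0 mulr1 (_ : ord_max = ord0) ?ffun_cons0 //.
    exact: val_inj.
  by rewrite sumr_const card_ffun !card_ord mxE.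
have -> : u^T *m M ^+ q.+1 = (M^T *m u)^T *m M ^+ q.
  by rewrite trmx_mul trmxK exprS mulmxA.
rewrite -IHq big_ffun_recl exchange_big /=; apply: eq_bigr => g _.
have cons_max j : ffun_cons j g ord_max = g ord_max.
  by rewrite (_ : ord_max = lift ord0 ord_max) ?ffun_cons_lift //; apply: val_inj.
under eq_bigr => j _ do rewrite cons_max walk_weight_cons ffun_cons0 !mulrA.
rewrite mxE -!mulr_suml; congr (_ * _ * _); apply: eq_bigr => j _.
by rewrite mxE mulrC.
Qed.

End Walks.

Lemma eigenvector_mx_pow (R : comPzRingType) z (M : 'M[R]_z) (v : 'cV_z) c q :
  M *m v = c *: v -> M ^+ q *m v = c ^+ q *: v.
Proof.
move=> Mv; elim: q => [|q IHq]; first by rewrite !expr0 mul1mx scale1r.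
by rewrite exprS -mulmxE -mulmxA IHq -scalemxAr Mv scalerA -exprSr.
Qed.

Lemma mx_form_eigenbasis (R : comUnitRingType) z (M X : 'M[R]_z)
    (lam : 'I_z -> R) (u v : 'cV_z) :
  X^T *m X = 1%:M -> (forall i, M *m col i X = lam i *: col i X) ->
  (u^T *m M *m v) 0 0 =
    \sum_i lam i * (u^T *m col i X) 0 0 * (v^T *m col i X) 0 0.
Proof.
move=> XtX eigM.
have coord_v i : (X^T *m v) i 0 = (v^T *m col i X) 0 0.
  by rewrite !mxE; apply: eq_bigr => k _; rewrite !mxE mulrC.
have coord_Mu i : (u^T *m M *m X) 0 i = lam i * (u^T *m col i X) 0 0.
  transitivity ((u^T *m M *m col i X) 0 0).
    by rewrite !mxE; apply: eq_bigr => k _; rewrite !mxE.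
  by rewrite -mulmxA eigM -scalemxAr mxE.
have XXt : X *m X^T = 1%:M by apply: mulmx1C.
transitivity ((u^T *m M *m X *m (X^T *m v)) 0 0).
  by rewrite mulmxA -[_ *m X *m X^T]mulmxA XXt mulmx1.
by rewrite mxE; apply: eq_bigr => i _; rewrite coord_Mu coord_v.
Qed.

Definition minmx (R : nzRingType) (b : seq nat) : 'M[R]_(size b) :=
  \matrix_(i, j) (minn (nth 0%N b i) (nth 0%N b j))%:R.

Lemma Fp_mx_form (R : comNzRingType) (b : seq nat) q :
  (Fp b q.+1)%:R = ((wvec R b)^T *m minmx R b ^+ q *m wvec R b) 0 0.
Proof.
rewrite -sum_walks_mx_pow /Fp natr_sum; apply: eq_bigr => f _ /=.
set c := [seq _ | k <- _].
have nth_c (k : 'I_q.+1) : nth 0%N c k = nth 0%N b (f k).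
  by rewrite (nth_map ord0) ?size_enum_ord ?nth_ord_enum.
rewrite -nth0 (nth_c ord0) -nth_last size_map size_enum_ord /=.
have /= -> := nth_c ord_max.
rewrite !natrM natr_prod /walk_weight !mxE; congr (_ * _ * _).
by apply: eq_bigr => k _; rewrite mxE -(nth_c (widen_ord _ k)) -nth_c lift0.
Qed.

Lemma Bmat_minmx (R : nzRingType) (b : seq nat) :
  sorted geq b -> Bmat R b = minmx R b.
Proof.
move=> b_sorted; apply/matrixP => i j; rewrite !mxE.
have b_noninc (k l : 'I_(size b)) : (k <= l)%N -> (nth 0%N b l <= nth 0%N b k)%N.
  by apply: (sorted_leq_nth (rev_trans leq_trans) leqnn 0%N b_sorted); rewrite inE.
case: (leqP i j) => [ij | /ltnW ji].
  by rewrite (minn_idPr (b_noninc _ _ ij)).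
by rewrite (minn_idPl (b_noninc _ _ ji)).
Qed.

Lemma bzps_sorted n (a : 'I_n -> bool) : sorted geq (bzps a).
Proof.
rewrite /bzps sorted_map; apply: (@sub_sorted _ (relpre val ltn)).
  move=> i j ij; apply: subset_leq_card; apply/subsetP => k.
  by rewrite !inE => /andP[jk ->]; rewrite (ltn_trans ij jk).
apply: sorted_filter; first by move=> j i k; apply: ltn_trans.
by rewrite -sorted_map val_enum_ord iota_ltn_sorted.
Qed.

Theorem corollaryA2 (R : realFieldType) (n : nat) (a : 'I_n -> bool)
    (X : 'M[R]_(size (bzps a))) (lam : 'I_(size (bzps a)) -> R) (p : nat) :
  (forall i : 'I_n, val i = 0%N -> a i) ->
  thr_connected a ->
  (4 <= n)%N ->
  (n.-1 < thr_size a)%N -> (thr_size a < 'C(n, 2))%N ->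
  X^T *m X = 1%:M ->
  (forall i, Bmat R (bzps a) *m col i X = lam i *: col i X) ->
  (1 <= p)%N ->
  (Fp (bzps a) p)%:R =
    \sum_(i < size (bzps a))
       ((wvec R (bzps a))^T *m col i X) 0 0 ^+ 2 * lam i ^+ p.-1.
Proof.
move=> _ _ _ _ _ XtX eigB; case: p => // q _ /=.
rewrite Fp_mx_form -(Bmat_minmx R (bzps_sorted a)).
rewrite (mx_form_eigenbasis (lam := fun i => lam i ^+ q) _ _ XtX); last first.
  by move=> i; apply: eigenvector_mx_pow.
by apply: eq_bigr => i _; rewrite -mulrA mulrC expr2.
Qed.
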